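(* Let $p\ge1$ be an integer and let $\bm U:[0,T]\to\mathbb V_h$ be a differentiable solution of the semi-discrete system $$(\bm I+\mathbb A^2)\frac{d}{dt}\bm U+\mathbb D(\bm U)\bm U=0.$$ Then $P(t)=\|\bm U(t)\|_h^2+|\bm U(t)|_{2,h}^2$ satisfies $P(t)=P(0)$ for all $t\in[0,T]$.
   Context: $\Omega=[x_L,x_R]\times[y_L,y_R]$, $l_1=x_R-x_L$, $l_2=y_R-y_L$, $N_1,N_2$ even, $h_r=l_r/N_r$, grid points $x_{j_1}=x_L+j_1h_1$, $y_{j_2}=y_L+j_2h_2$, $0\le j_r\le N_r-1$. $\mathbb V_h$: doubly periodic grid functions identified with vectors $\bm U=(U_{0,0},U_{1,0},\dots,U_{N_1-1,0},U_{0,1},\dots,U_{N_1-1,N_2-1})^T$. $\langle\bm U,\bm V\rangle_h=h_1h_2\sum U_{j_1,j_2}V_{j_1,j_2}$, $\|\bm U\|_h^2=\langle\bm U,\bm U\rangle_h$. With $\mu_r=2\pi/l_r$, $g^{(1)}_k(x)=\frac1{N_1}\sum_{l=-N_1/2}^{N_1/2}\frac1{a_l}e^{\mathrm il\mu_1(x-x_k)}$, $a_l=1$ for $|l|<N_1/2$, $a_{\pm N_1/2}=2$ (similarly $g^{(2)}_k(y)$), $\bm D_s^x=(\frac{d^s}{dx^s}g^{(1)}_k(x_j))_{j,k=0}^{N_1-1}$, $\bm D_s^y=(\frac{d^s}{dy^s}g^{(2)}_k(y_j))_{j,k=0}^{N_2-1}$. $\mathbb A=\bm I_{N_2}\otimes\bm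 D_2^x+\bm D_2^y\otimes\bm I_{N_1}$, $\mathbb B=\bm I_{N_2}\otimes\bm D_3^x+\bm D_2^y\otimes\bm D_1^x$, $\mathbb L_h=\bm I_{N_2}\otimes\bm D_1^x+\bm D_1^y\otimes\bm I_{N_1}$ ($\otimes$ Kronecker product), $\mathbb D(\bm W)=\mathbb B+\mathbb L_h+\frac1{p+2}(\mathrm{diag}(\bm W^p)\mathbb L_h+\mathbb L_h\mathrm{diag}(\bm W^p))$ with $\bm W^p$ the componentwise power; $|\bm U|_{2,h}=\|\mathbb A\bm U\|_h$. This system is the Fourier pseudo-spectral semi-discretization of the GR-KdV equation $u_t+\Delta^2u_t+\Delta u_x+(1+u^p)(u_x+u_y)=0$ with periodic boundary conditions. *)

From mathcomp Require Import all_boot all_order all_algebra.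
From mathcomp Require Import all_classical all_reals all_analysis.
From mathcomp.real_closed Require Export mxtens.

Unset Implicit Arguments.
Unset Strict Implicit.
Unset Printing Implicit Defensive.

Import Order.TTheory GRing.Theory Num.Theory.
Local Open Scope ring_scope.

Section GRKdV.
Variable R : realType.

(* a_l for l = i - N/2, i = 0..N : a_{+-N/2} = 2, otherwise 1 *)
Definition acoef (N : nat) (i : nat) : R :=
  if (i == 0)%N || (i == N)%N then 2 else 1.

Definition gstep (len : R) (N : nat) : R := len / N%:R.
Definition gpt (xL len : R) (N : nat) (j : nat) : R := xL + j%:R * gstep len N.

(* Trigonometric interpolation basis function
   g_k(x) = 1/N sum_{l=-N/2}^{N/2} (1/a_l) e^{i l mu (x - x_k)},  mu = 2 pi / len.
   The sum is symmetric in l (a_l = a_{-l}), so the sine parts cancel and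
   g_k(x) = 1/N sum_{l=-N/2}^{N/2} (1/a_l) cos(l mu (x - x_k)); we index
   l = i - N/2 with i = 0..N. *)
Definition gbasis (xL len : R) (N : nat) (k : nat) (x : R) : R :=
  N%:R^-1 * \sum_(i < N.+1)
     (acoef N i)^-1 * cos ((i%:R - (N./2)%:R) * (2 * pi / len)
                            * (x - gpt xL len N k)).

Definition Dmat (s : nat) (xL len : R) (N : nat) : 'M[R]_N :=
  \matrix_(j < N, k < N) derive1n s (gbasis xL len N k) (gpt xL len N j).

(* Grid vectors: U = (U_{0,0},...,U_{N1-1,0},U_{0,1},...), index j2*N1 + j1;
   this is the index convention of the Kronecker product tensmx (A *t B). *)
Definition gvec (N1 N2 : nat) := 'cV[R]_(N2 * N1).

Definition Amat (xL xR yL yR : R) (N1 N2 : nat) : 'M[R]_(N2 * N1) :=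
  tensmx (1%:M : 'M[R]_N2) (Dmat 2 xL (xR - xL) N1)
  + tensmx (Dmat 2 yL (yR - yL) N2) (1%:M : 'M[R]_N1).

Definition Bmat (xL xR yL yR : R) (N1 N2 : nat) : 'M[R]_(N2 * N1) :=
  tensmx (1%:M : 'M[R]_N2) (Dmat 3 xL (xR - xL) N1)
  + tensmx (Dmat 2 yL (yR - yL) N2) (Dmat 1 xL (xR - xL) N1).

Definition Lmat (xL xR yL yR : R) (N1 N2 : nat) : 'M[R]_(N2 * N1) :=
  tensmx (1%:M : 'M[R]_N2) (Dmat 1 xL (xR - xL) N1)
  + tensmx (Dmat 1 yL (yR - yL) N2) (1%:M : 'M[R]_N1).

Definition diagpow (n p : nat) (W : 'cV[R]_n) : 'M[R]_n :=
  diag_mx (\row_i (W i ord0 ^+ p)).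

Definition Dnl (xL xR yL yR : R) (N1 N2 p : nat) (W : 'cV[R]_(N2 * N1))
  : 'M[R]_(N2 * N1) :=
  Bmat xL xR yL yR N1 N2 + Lmat xL xR yL yR N1 N2
  + (p.+2%:R)^-1 *: (diagpow _ p W *m Lmat xL xR yL yR N1 N2
                     + Lmat xL xR yL yR N1 N2 *m diagpow _ p W).

Definition inner_h (h1 h2 : R) (n : nat) (U V : 'cV[R]_n) : R :=
  h1 * h2 * \sum_(i < n) U i ord0 * V i ord0.
Definition normh2 (h1 h2 : R) (n : nat) (U : 'cV[R]_n) : R := inner_h h1 h2 n U U.

(* P = ||U||_h^2 + |U|_{2,h}^2, with |U|_{2,h} = ||A U||_h *)
Definition Pener (xL xR yL yR : R) (N1 N2 : nat) (U : 'cV[R]_(N2 * N1)) : R :=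
  let h1 := gstep (xR - xL) N1 in let h2 := gstep (yR - yL) N2 in
  normh2 h1 h2 _ U + normh2 h1 h2 _ (Amat xL xR yL yR N1 N2 *m U).

End GRKdV.

Arguments acoef {R} N i.
Arguments gstep {R} len N.
Arguments gpt {R} xL len N j.
Arguments gbasis {R} xL len N k x.
Arguments Dmat {R} s xL len N.
Arguments Amat {R} xL xR yL yR N1 N2.
Arguments Bmat {R} xL xR yL yR N1 N2.
Arguments Lmat {R} xL xR yL yR N1 N2.
Arguments diagpow {R} n p W.
Arguments Dnl {R} xL xR yL yR N1 N2 p W.
Arguments inner_h {R} h1 h2 n U V.
Arguments normh2 {R} h1 h2 n U.
Arguments Pener {R} xL xR yL yR N1 N2 U.

From mathcomp Require Import all_boot all_order all_algebra.
From mathcomp Require Import all_classical all_reals all_analysis.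
From mathcomp.real_closed Require Import mxtens.
From mathcomp Require Import ring lra.
Import Order.TTheory GRing.Theory Num.Theory numFieldTopology.Exports numFieldNormedType.Exports.
Local Open Scope ring_scope.
Local Open Scope classical_set_scope.

(* The entry (j, k) of D_s is the s-th derivative, at x_j - x_k,
   of an even trigonometric sum, hence D_s^T = (-1)^s D_s: A is symmetric, while
   B, L_h and (diag(W^p) being symmetric) D(W) are skew-symmetric.  Since
   P(U) = h1 h2 U^T (I + A^2) U, along a solution
   P' = 2 h1 h2 U^T (I + A^2) U' = -2 h1 h2 U^T D(U) U = 0,
   and the mean value theorem makes P constant on [0, T]. *)

Set Implicit Arguments.
Unset Strict Implicit.
Unset Printing Implicit Defensive.

Section CosineSum.
Variable R : realType.

Lemma is_derive_cos_affine (w x0 e x : R) :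
  is_derive x 1 (fun y => cos (w * (y - x0) + e)) (w * cos (w * (x - x0) + e + pi / 2)).
Proof.
have affine : is_derive x 1 (fun y => w * (y - x0) + e) w.
  by apply: is_derive_eq; rewrite subr0 scaler1 addr0.
rewrite cosDpihalf mulrC.
exact: (is_derive1_comp (is_derive_cos _) affine).
Qed.

Variables (n : nat) (c w : 'I_n -> R).

Definition cos_sum (s : nat) (x0 x : R) : R :=
  \sum_i c i * (w i ^+ s * cos (w i * (x - x0) + s%:R * (pi / 2))).

Lemma is_derive_cos_sum s (x0 x : R) : is_derive x 1 (cos_sum s x0) (cos_sum s.+1 x0 x).
Proof.
rewrite /cos_sum -fct_sumE; apply: is_derive_sum => i.
apply: (is_derive_eq (is_deriveZ (c i) (is_deriveZ (w i ^+ s)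
  (is_derive_cos_affine (w i) x0 (s%:R * (pi / 2)) x)))).
by rewrite /GRing.scale /= -[s.+1%:R]natr1 (mulrDl (s%:R) 1) mul1r addrA exprSr; ring.
Qed.

Lemma derive1n_cos_sum s (x0 : R) : derive1n s (cos_sum 0 x0) = cos_sum s x0.
Proof.
elim: s => [|s IH]; first by rewrite derive1n0.
apply/funext => x; rewrite derive1nS IH derive1E.
have H := is_derive_cos_sum s x0 x; exact: derive_val.
Qed.

Lemma cosBnpi (y : R) s : cos (y - s%:R * pi) = (-1) ^+ s * cos y.
Proof.
elim: s => [|s IH]; first by rewrite mul0r subr0 expr0 mul1r.
rewrite -natr1 (mulrDl (s%:R) 1) mul1r opprD addrA.
have := cosDpi (y - s%:R * pi - pi); rewrite subrK IH => cos_shift.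
by rewrite exprS -mulrA cos_shift mulN1r opprK.
Qed.

Lemma cos_sum_swap s (x0 x : R) : cos_sum s x x0 = (-1) ^+ s * cos_sum s x0 x.
Proof.
rewrite /cos_sum mulr_sumr; apply: eq_bigr => i _.
set p2 := pi / 2.
have cos_reflect : cos (w i * (x0 - x) + s%:R * p2)
    = (-1) ^+ s * cos (w i * (x - x0) + s%:R * p2).
  rewrite -cosBnpi -cosN; congr cos.
  have -> : pi = p2 + p2 :> R by rewrite /p2 -splitr.
  ring.
by rewrite cos_reflect; ring.
Qed.

End CosineSum.

Section GridDerivatives.
Variables (R : realType) (xL len : R) (N : nat).

Definition gfreq (i : 'I_N.+1) : R := (i%:R - (N./2)%:R) * (2 * pi / len).
Definition gweight (i : 'I_N.+1) : R := N%:R^-1 / acoef N i.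

Lemma gbasisE k : gbasis xL len N k = cos_sum gweight gfreq 0 (gpt xL len N k).
Proof.
apply/funext => x; rewrite /gbasis /cos_sum mulr_sumr; apply: eq_bigr => i _.
by rewrite expr0 mul1r mul0r addr0 mulrA.
Qed.

Lemma trmx_Dmat s : (Dmat s xL len N)^T = (-1) ^+ s *: Dmat s xL len N.
Proof.
by apply/matrixP => j k; rewrite !mxE !gbasisE !derive1n_cos_sum cos_sum_swap.
Qed.

Lemma trmx_Dmat_even s : ~~ odd s -> (Dmat s xL len N)^T = Dmat s xL len N.
Proof. by move=> /negPf even_s; rewrite trmx_Dmat -signr_odd even_s scale1r. Qed.

Lemma trmx_Dmat_odd s : odd s -> (Dmat s xL len N)^T = - Dmat s xL len N.
Proof. by move=> odd_s; rewrite trmx_Dmat -signr_odd odd_s scaleN1r. Qed.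

End GridDerivatives.

Section MatrixTranspose.
Variable R : comPzRingType.

Lemma tensNmx m n p q (A : 'M[R]_(m, n)) (B : 'M[R]_(p, q)) : (- A) *t B = - (A *t B).
Proof. by apply/matrixP => i j; rewrite !mxE mulNr. Qed.

Lemma tensmxN m n p q (A : 'M[R]_(m, n)) (B : 'M[R]_(p, q)) : A *t (- B) = - (A *t B).
Proof. by apply/matrixP => i j; rewrite !mxE mulrN. Qed.

Lemma trmx_skew_sym n (S P : 'M[R]_n) : S^T = - S -> P^T = P ->
  (P *m S + S *m P)^T = - (P *m S + S *m P).
Proof.
move=> skewS symP; rewrite linearD /= !trmx_mul skewS symP.
by rewrite mulmxN mulNmx addrC opprD.
Qed.

Lemma mulmx_expr2 n m (M : 'M[R]_n) (X : 'M[R]_(n, m)) : M ^+ 2 *m X = M *m (M *m X).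
Proof. by rewrite expr2 -mulmxE mulmxA. Qed.

Lemma trmx_add1_expr2 n (M : 'M[R]_n) : M^T = M -> (1%:M + M ^+ 2)^T = 1%:M + M ^+ 2.
Proof. by move=> symM; rewrite linearD /= trmx1 expr2 -mulmxE trmx_mul symM. Qed.

End MatrixTranspose.

Section GRKdVMatrices.
Variables (R : realType) (xL xR yL yR : R) (N1 N2 p : nat).

Local Notation A := (Amat xL xR yL yR N1 N2).
Local Notation B := (Bmat xL xR yL yR N1 N2).
Local Notation L := (Lmat xL xR yL yR N1 N2).

Lemma trmx_Amat : A^T = A.
Proof. by rewrite /Amat linearD /= !trmx_tens !trmx1 !trmx_Dmat_even. Qed.

Lemma trmx_Bmat : B^T = - B.
Proof.
rewrite /Bmat linearD /= !trmx_tens !trmx1.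
rewrite trmx_Dmat_odd // trmx_Dmat_even // trmx_Dmat_odd //.
by rewrite !tensmxN opprD.
Qed.

Lemma trmx_Lmat : L^T = - L.
Proof.
rewrite /Lmat linearD /= !trmx_tens !trmx1.
by rewrite trmx_Dmat_odd // trmx_Dmat_odd // tensmxN tensNmx opprD.
Qed.

Lemma trmx_Dnl W : (Dnl xL xR yL yR N1 N2 p W)^T = - Dnl xL xR yL yR N1 N2 p W.
Proof.
rewrite /Dnl; move: trmx_Bmat trmx_Lmat (tr_diag_mx (\row_i (W i 0 ^+ p))).
rewrite -/(diagpow _ p W); move: B L (diagpow _ p W) => B' L' P trB trL trP.
rewrite linearD linearZ /= trmx_skew_sym // linearD /= trB trL.
by rewrite scalerN -!opprD.
Qed.

End GRKdVMatrices.

Section QuadraticForms.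
Variable R : realType.

Definition qform n (M : 'M[R]_n) (X : 'cV[R]_n) : R := (X^T *m (M *m X)) 0 0.

Lemma mx11_trmx (Y : 'M[R]_1) : Y 0 0 = Y^T 0 0.
Proof. by rewrite mxE. Qed.

Lemma dotmxE n (X Y : 'cV[R]_n) : (X^T *m Y) 0 0 = \sum_i X i 0 * Y i 0.
Proof. by rewrite mxE; apply: eq_bigr => i _; rewrite mxE. Qed.

Lemma qform_skew n (S : 'M[R]_n) X : S^T = - S -> qform S X = 0.
Proof.
move=> skewS; have : qform S X = - qform S X.
  rewrite /qform {1}mx11_trmx !trmx_mul trmxK skewS.
  by rewrite mulmxN mulNmx -mulmxA mxE.
lra.
Qed.

Lemma continuous_qform n (M : 'M[R]_n) : continuous (qform M).
Proof.
have -> : qform M = fun X => \sum_i X i 0 * \sum_j M i j * X j 0.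
  by apply/funext => X; rewrite /qform dotmxE; under eq_bigr do rewrite mxE.
apply: (continuous_big add_continuous) => i _ X.
apply: continuousM; first exact: coord_continuous.
apply: (continuous_big add_continuous) => j _ {}X.
by apply: continuousM; [exact: cst_continuous | exact: coord_continuous].
Qed.

Lemma is_derive_mx_entry m n (X : R -> 'M[R]_(m, n)) t i j :
  derivable X t 1 -> is_derive t 1 (fun s => X s i j) (derive1 X t i j).
Proof.
move=> dX; rewrite derive1E (derive_mx dX) mxE.
exact/derivableP/((derivable_mxP X t 1).1 dX i j).
Qed.

Lemma is_derive_dotmx n (X Y : R -> 'cV[R]_n) (dX dY : 'cV[R]_n) (t : R) :
  (forall i, is_derive t 1 (fun s => X s i 0) (dX i 0)) ->
  (forall i, is_derive t 1 (fun s => Y s i 0) (dY i 0)) ->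
  is_derive t 1 (fun s => ((X s)^T *m Y s) 0 0) (((X t)^T *m dY + dX^T *m Y t) 0 0).
Proof.
move=> dXt dYt; under eq_fun do rewrite dotmxE.
rewrite mxE !dotmxE -big_split /= -fct_sumE.
apply: is_derive_sum => i; apply: (is_derive_eq (is_deriveM (dXt i) (dYt i))).
by rewrite /GRing.scale /= [Y t i 0 * _]mulrC.
Qed.

Lemma is_derive_mulmx n m (M : 'M[R]_(m, n)) (X : R -> 'cV[R]_n) (dX : 'cV[R]_n) (t : R) :
  (forall j, is_derive t 1 (fun s => X s j 0) (dX j 0)) ->
  forall i, is_derive t 1 (fun s => (M *m X s) i 0) ((M *m dX) i 0).
Proof.
move=> dXt i; under eq_fun do rewrite mxE.
by rewrite mxE -fct_sumE; apply: is_derive_sum => j.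
Qed.

Lemma is_derive_qform n (M : 'M[R]_n) (X : R -> 'cV[R]_n) (t : R) :
  M^T = M -> derivable X t 1 ->
  is_derive t 1 (fun s => qform M (X s)) (2 * ((X t)^T *m (M *m derive1 X t)) 0 0).
Proof.
move=> symM dX; have dXt j := is_derive_mx_entry j 0 dX.
apply: is_derive_eq; first exact: is_derive_dotmx (is_derive_mulmx M dXt).
rewrite mxE [X in _ + X]mx11_trmx !trmx_mul trmxK symM mulmxA.
by rewrite mulr_natl mulr2n.
Qed.

End QuadraticForms.

Section EnergyConservation.
Variables (R : realType) (xL xR yL yR : R) (N1 N2 p : nat).

Local Notation A := (Amat xL xR yL yR N1 N2).
Local Notation P := (Pener xL xR yL yR N1 N2).

Lemma PenerE (X : 'cV[R]_(N2 * N1)) :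
  P X = gstep (xR - xL) N1 * gstep (yR - yL) N2 * qform (1%:M + A ^+ 2) X.
Proof.
rewrite /Pener /normh2 /inner_h -!dotmxE -mulrDr /qform.
by rewrite mulmxDl mul1mx mulmxDr mulmx_expr2 trmx_mul trmx_Amat -mulmxA [in RHS]mxE.
Qed.

Lemma continuous_Pener : continuous P.
Proof.
have -> : P = fun X => gstep (xR - xL) N1 * gstep (yR - yL) N2 * qform (1%:M + A ^+ 2) X.
  by apply/funext => X; rewrite PenerE.
move=> X; apply: (@continuousM _ _ (fun=> _) (qform _)).
  exact: cst_continuous.
exact: continuous_qform.
Qed.

Lemma is_derive_Pener_solution (U : R -> 'cV[R]_(N2 * N1)) (t : R) :
  derivable U t 1 ->
  (1%:M + A ^+ 2) *m derive1 U t + Dnl xL xR yL yR N1 N2 p (U t) *m U t = 0 ->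
  is_derive t 1 (fun s => P (U s)) 0.
Proof.
move=> dU /eqP; rewrite addr_eq0 => /eqP ode.
set h := gstep (xR - xL) N1 * gstep (yR - yL) N2.
have -> : (fun s => P (U s)) = h \*: (fun s => qform (1%:M + A ^+ 2) (U s)).
  by apply/funext => s; rewrite PenerE.
have := is_deriveZ h (is_derive_qform (trmx_add1_expr2 (trmx_Amat xL xR yL yR N1 N2)) dU).
move/is_derive_eq; apply.
have -> : ((U t)^T *m ((1%:M + A ^+ 2) *m derive1 U t)) 0 0
    = - qform (Dnl xL xR yL yR N1 N2 p (U t)) (U t).
  by rewrite ode mulmxN mxE.
by rewrite qform_skew ?trmx_Dnl // oppr0 mulr0 scaler0.
Qed.

End EnergyConservation.

Lemma is_derive_0_itv_cst (R : realType) (f : R -> R) (a b : R) : a <= b ->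
  (forall x, x \in `]a, b[%R -> is_derive x 1 f 0) ->
  {within `[a, b], continuous f} -> f b = f a.
Proof.
move=> le_ab f'0 cf; have [c _] := MVT_segment le_ab f'0 cf.
by rewrite mul0r => /eqP; rewrite subr_eq0 => /eqP.
Qed.

Theorem lemma2p6 (R : realType) (xL xR yL yR : R) (N1 N2 p : nat) (T : R)
  (U : R -> 'cV[R]_(N2 * N1)) :
  xL < xR -> yL < yR ->
  (0 < N1)%N -> ~~ odd N1 -> (0 < N2)%N -> ~~ odd N2 ->
  (1 <= p)%N ->
  {within `[0, T], continuous U} ->
  (forall t, t \in `]0, T[ ->
     derivable U t 1 /\
     (1%:M + Amat xL xR yL yR N1 N2 ^+ 2) *m (derive1 U t)
       + Dnl xL xR yL yR N1 N2 p (U t) *m U t = 0) ->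
  forall t, t \in `[0, T] ->
    Pener xL xR yL yR N1 N2 (U t) = Pener xL xR yL yR N1 N2 (U 0).
Proof.
move=> _ _ _ _ _ _ _ contU solU t; rewrite inE /= in_itv /= => /andP[t_ge0 t_leT].
apply: (is_derive_0_itv_cst (f := Pener xL xR yL yR N1 N2 \o U) t_ge0).
  move=> s; rewrite in_itv /= => /andP[s_gt0 s_ltt].
  have s_in : s \in `]0, T[ by rewrite inE /= in_itv /= s_gt0 (lt_le_trans s_ltt t_leT).
  have [dU odeU] := solU s s_in.
  exact: is_derive_Pener_solution dU odeU.
apply: (@continuous_subspaceW _ _ _ `[0, T]).
  by apply: subset_itv; rewrite bnd_simp.
by move=> s; exact: continuous_comp (contU s) (@continuous_Pener _ _ _ _ _ _ _ (U s)).
Qed.
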